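(* Let $G=H\times K$ where $H$ and $K$ are non-abelian finite $p$-groups, and let $\alpha\in Z^2(G,\mathbb{C}^\times)$. (1) If $\alpha=(1,1,f)$, then no irreducible $\alpha$-representation of $G$ is faithful. (2) Suppose $Z(G)\subseteq G'$ and $\alpha=(\beta,\gamma,f)$. Then an irreducible $\alpha$-representation of $G$ is faithful if and only if $1$ is the only $\beta$-regular element of $Z(H)$ and $1$ is the only $\gamma$-regular element of $Z(K)$. Furthermore, $G$ admits a faithful irreducible $\alpha$-representation if and only if $H$ admits a faithful irreducible $\beta$-representation and $K$ admits a faithful irreducible $\gamma$-representation.
   Context: All groups finite, representations complex. For a cocycle $\alpha$, an $\alpha$-representation is a map $\rho:G\to\mathrm{GL}(V)$ with $\rho(1)=1$ and $\rho(g)\rho(h)=\alpha(g,h)\rho(gh)$; it is faithful if the only $g$ with $\rho(g)$ scalar is $g=1$. An element $x\in G$ is $\alpha$-regular if $\alpha(g,x)=\alpha(x,g)$ for all $g\in C_G(x)$. For $G=H\times K$, cocycles $\beta$ of $H$, $\gamma$ of $K$ and a homomorphism $f:H/H'\otimes_{\mathbb{Z}}K/K'\to\mathbb{C}^\times$, $\alpha=(\beta,\gamma,f)$ denotes the cocycle $\alpha(h_1k_1,h_2k_2)=\beta(h_1,h_2)\gamma(k_1,k_2)f(h_1H'\otimes k_2K')$. *)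

From HB Require Import structures.
From mathcomp Require Import all_boot all_order all_algebra all_fingroup all_solvable all_field all_character.
Set Implicit Arguments. Unset Strict Implicit. Unset Printing Implicit Defensive.
Import GRing.Theory Num.Theory.
Local Open Scope ring_scope.

Definition is_cocycle (gT : finGroupType) (G : {set gT}) (a : gT -> gT -> algC) :=
  [/\ forall x y, x \in G -> y \in G -> a x y != 0,
      forall x, x \in G -> a 1%g x = 1 /\ a x 1%g = 1
    & forall x y z, x \in G -> y \in G -> z \in G ->
        a x y * a (x * y)%g z = a y z * a x (y * z)%g].

Definition is_alpha_rep (gT : finGroupType) (G : {set gT}) (a : gT -> gT -> algC)
  (n : nat) (rho : gT -> 'M[algC]_n) :=
  [/\ rho 1%g = 1%:M,
      forall g, g \in G -> rho g \in unitmx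
    & forall g h, g \in G -> h \in G -> (rho g *m rho h = a g h *: rho (g * h)%g)%R].

Definition alpha_irreducible (gT : finGroupType) (G : {set gT}) (n : nat)
  (rho : gT -> 'M[algC]_n) :=
  (0 < n)%N /\
  forall U : 'M[algC]_n, (forall g, g \in G -> (U *m rho g <= U)%MS) ->
    U = 0 \/ row_full U.

Definition alpha_faithful (gT : finGroupType) (G : {set gT}) (n : nat)
  (rho : gT -> 'M[algC]_n) :=
  forall g, g \in G -> is_scalar_mx (rho g) -> g = 1%g.

Definition has_faithful_irr (gT : finGroupType) (G : {set gT}) (a : gT -> gT -> algC) :=
  exists n (rho : gT -> 'M[algC]_n),
    [/\ is_alpha_rep G a rho, alpha_irreducible G rho & alpha_faithful G rho].

Definition alpha_regular (gT : finGroupType) (G : {set gT}) (a : gT -> gT -> algC) (x : gT) :=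
  forall g, g \in ('C_G[x])%g -> a g x = a x g.

(* A homomorphism H/H' (x) K/K' -> C^x, i.e. (universal property of the tensor
   product) a bimultiplicative map H x K -> C^x. *)
Definition is_bihom (hT kT : finGroupType) (f : hT -> kT -> algC) :=
  [/\ forall h k, f h k != 0,
      forall h1 h2 k, f (h1 * h2)%g k = f h1 k * f h2 k
    & forall h k1 k2, f h (k1 * k2)%g = f h k1 * f h k2].

Definition prod_cocycle (hT kT : finGroupType) (b : hT -> hT -> algC)
  (c : kT -> kT -> algC) (f : hT -> kT -> algC) : (hT * kT) -> (hT * kT) -> algC :=
  fun x y => b x.1 y.1 * c x.2 y.2 * f x.1 y.2.

Definition trivial_cocycle (gT : finGroupType) : gT -> gT -> algC := fun _ _ => 1.

From HB Require Import structures.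
From mathcomp Require Import all_boot all_order all_algebra all_fingroup all_solvable all_field all_character.
From mathcomp Require Import ring.
From Stdlib Require Import Classical_Prop.

Set Implicit Arguments. Unset Strict Implicit. Unset Printing Implicit Defensive.
Import GRing.Theory Num.Theory.
Local Open Scope ring_scope.

(* For an irreducible alpha-representation rho, Schur's lemma shows that
   a central element z has rho z scalar exactly when it is alpha-regular, and
   the elements with scalar image form a normal subgroup; in a nilpotent group
   a nontrivial normal subgroup meets the centre, so rho is faithful iff 1 is
   the only alpha-regular central element.  For alpha = (beta, gamma, f) the
   bihomomorphism f vanishes on the derived subgroup, so on central elements of
   G' (which is all of Z(G) when Z(G) <= G') alpha-regularity splits into
   beta- and gamma-regularity; for (1) take 1 <> x in Z(H) /\ H', whence (x, 1)
   is a nontrivial alpha-regular central element. *)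

Lemma unitmx_neq0 n (M : 'M[algC]_n) : (0 < n)%N -> M \in unitmx -> M != 0.
Proof.
case: n M => // n M _ uM; apply/eqP => M0.
by have := mulmxV uM; rewrite M0 mul0mx => /esym/eqP; rewrite -[1%:M]/(1 : 'M_n.+1) oner_eq0.
Qed.

Lemma scalemx_scalar n (M : 'M[algC]_n) c d : c != 0 -> c *: M = d%:M -> is_scalar_mx M.
Proof.
move=> c0 cM; apply/is_scalar_mxP; exists (c^-1 * d).
by rewrite -scale_scalar_mx -cM scalerA mulVf // scale1r.
Qed.

(* Schur's lemma: an eigenspace of A is rho-invariant, hence everything. *)
Lemma alpha_irr_commute_scalar (gT : finGroupType) (G : {set gT}) n
    (rho : gT -> 'M[algC]_n) (A : 'M[algC]_n) :
  alpha_irreducible G rho ->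
  (forall g, g \in G -> A *m rho g = rho g *m A) -> is_scalar_mx A.
Proof.
move=> [n_gt0 irr] cA.
have [lam] : exists lam, eigenvalue A lam.
  have : size (char_poly A) != 1%N by rewrite size_char_poly; case: n n_gt0 {irr cA rho A}.
  by case/closed_rootP => x rx; exists x; rewrite eigenvalue_root_char.
rewrite /eigenvalue /eigenspace => nzE.
have invE g : g \in G -> (kermx (A - lam%:M) *m rho g <= kermx (A - lam%:M))%MS.
  move=> Gg; rewrite sub_kermx -mulmxA mulmxBr -cA // scalar_mxC.
  by rewrite -mulmxBl mulmxA mulmx_ker mul0mx.
case: (irr _ invE) => [E0|fullE]; first by rewrite E0 eqxx in nzE.
have : (1%:M <= kermx (A - lam%:M))%MS by apply: submx_full.
by rewrite sub_kermx mul1mx subr_eq0 => /eqP ->; apply: scalar_mx_is_scalar.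
Qed.

Lemma mulhom_derived1 (gT : finGroupType) (phi : gT -> algC) :
  (forall x y, phi (x * y)%g = phi x * phi y) -> (forall x, phi x != 0) ->
  forall z, z \in [~: [set: gT], [set: gT]]%g -> phi z = 1.
Proof.
move=> phiM phi0.
have phi1 : phi 1%g = 1 by apply: (mulfI (phi0 1%g)); rewrite -phiM mulg1 mulr1.
have phiV x : phi x^-1%g = (phi x)^-1.
  by apply: (mulfI (phi0 x)); rewrite -phiM mulgV phi1 mulfV.
have kerG : group_set [set x | phi x == 1].
  apply/group_setP; split; first by rewrite inE phi1.
  by move=> x y; rewrite !inE phiM => /eqP -> /eqP ->; rewrite mulr1.
suff /subsetP sDker : ([~: [set: gT], [set: gT]] \subset Group kerG)%g.
  by move=> z /sDker; rewrite inE => /eqP.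
rewrite gen_subG; apply/subsetP => _ /imset2P[x y _ _ ->].
by rewrite inE /commg /conjg !phiM !phiV mulrCA mulKf // mulVf.
Qed.

Lemma center_commute (gT : finGroupType) (z g : gT) :
  z \in 'Z([set: gT])%g -> (z * g = g * z)%g.
Proof. by case/centerP => _ /(_ g (in_setT g)). Qed.

Lemma alpha_regular_center (gT : finGroupType) (a : gT -> gT -> algC) z :
  z \in 'Z([set: gT])%g -> alpha_regular [set: gT] a z <-> forall g, a g z = a z g.
Proof.
move=> Zz; split=> [reg g | comm g _]; last exact: comm.
by apply: reg; apply/setIP; split; [exact: in_setT | apply/cent1P; exact/esym/center_commute].
Qed.

Lemma alpha_regular1 (gT : finGroupType) (a : gT -> gT -> algC) :
  is_cocycle [set: gT] a -> alpha_regular [set: gT] a 1%g.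
Proof. by move=> [_ a1 _] g _; have [-> ->] := a1 g (in_setT g). Qed.

Lemma trivial_cocycle_cocycle (gT : finGroupType) : is_cocycle [set: gT] (@trivial_cocycle gT).
Proof. by split=> // *; rewrite oner_neq0. Qed.

Definition regular_center_trivial (gT : finGroupType) (a : gT -> gT -> algC) :=
  forall z, z \in 'Z([set: gT])%g -> alpha_regular [set: gT] a z -> z = 1%g.

Section AlphaRepresentation.
Variables (gT : finGroupType) (a : gT -> gT -> algC) (n : nat) (rho : gT -> 'M[algC]_n).
Hypotheses (rhoR : is_alpha_rep [set: gT] a rho) (n_gt0 : (0 < n)%N).

Lemma alpha_rep_cocycle_neq0 g h : a g h != 0.
Proof.
have [_ rhoU rhoM] := rhoR; apply/eqP => a0.
have : rho g *m rho h \in unitmx by rewrite unitmx_mul !rhoU ?in_setT.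
by rewrite rhoM ?in_setT // a0 scale0r => /(unitmx_neq0 n_gt0); rewrite eqxx.
Qed.

Lemma scalar_center_regular z :
  z \in 'Z([set: gT])%g -> is_scalar_mx (rho z) -> alpha_regular [set: gT] a z.
Proof.
move=> Zz /is_scalar_mxP[l rhoz]; apply/alpha_regular_center => // g.
have [_ rhoU rhoM] := rhoR.
have : rho g *m rho z = rho z *m rho g by rewrite rhoz scalar_mxC.
rewrite !rhoM ?in_setT // (center_commute g Zz) => /eqP.
rewrite -subr_eq0 -scalerBl scalemx_eq0 (negPf (unitmx_neq0 n_gt0 (rhoU _ (in_setT _)))).
by rewrite orbF subr_eq0 => /eqP.
Qed.

Lemma regular_center_scalar z : alpha_irreducible [set: gT] rho ->
  z \in 'Z([set: gT])%g -> alpha_regular [set: gT] a z -> is_scalar_mx (rho z).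
Proof.
move=> irr Zz /(alpha_regular_center _ Zz) reg; have [_ _ rhoM] := rhoR.
apply: (alpha_irr_commute_scalar irr) => g _.
by rewrite !rhoM ?in_setT // reg center_commute.
Qed.

Definition scalar_kernel := [set x | is_scalar_mx (rho x)].

Lemma scalar_kernel_group : group_set scalar_kernel.
Proof.
have [rho1 _ rhoM] := rhoR.
apply/group_setP; split; first by rewrite inE rho1 scalar_mx_is_scalar.
move=> x y; rewrite !inE => /is_scalar_mxP[l rhox] /is_scalar_mxP[m rhoy].
apply: (@scalemx_scalar _ _ (a x y) (l * m)); first exact: alpha_rep_cocycle_neq0.
by rewrite -rhoM ?in_setT // rhox rhoy scalar_mxM.
Qed.

Canonical scalar_kernel_group_of := Group scalar_kernel_group.

Lemma scalar_kernel_normal : (scalar_kernel_group_of <| [set: gT])%g.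
Proof.
have [rho1 _ rhoM] := rhoR.
rewrite /normal subsetT; apply/normsP => x _; apply/eqP.
rewrite eqEcard cardJg leqnn andbT; apply/subsetP => y.
rewrite mem_conjg !inE -{2}(conjgKV x y); move: (y ^ x^-1)%g => w /is_scalar_mxP[l rhow].
rewrite conjgE.
(* rho (x^-1 w x) is proportional to rho x^-1 * rho w * rho x = l * rho x^-1 * rho x *)
apply: (@scalemx_scalar _ _ (a x^-1%g w * a (x^-1 * w)%g x) (l * a x^-1%g x)).
  by rewrite mulf_neq0 ?alpha_rep_cocycle_neq0.
rewrite mulgA -scalerA -rhoM ?in_setT // scalemxAl -rhoM ?in_setT // rhow scalar_mxC -mulmxA.
by rewrite rhoM ?in_setT // mulVg rho1 scalemx1 -scalar_mxM.
Qed.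

Lemma alpha_faithfulP : nilpotent [set: gT] -> alpha_irreducible [set: gT] rho ->
  alpha_faithful [set: gT] rho <-> regular_center_trivial a.
Proof.
move=> nilG irr; split=> [faith z Zz reg | trivZ g _ rhog].
  exact: faith (in_setT z) (regular_center_scalar irr Zz reg).
have [// | ntg] := eqVneq g 1%g.
have ntS : (scalar_kernel_group_of :!=: 1)%g by apply/trivgPn; exists g; rewrite ?inE.
have /trivgPn[z /setIP[Sz Zz] ntz] := meet_center_nil nilG scalar_kernel_normal ntS.
by rewrite inE in Sz; rewrite (trivZ z Zz (scalar_center_regular Zz Sz)) eqxx in ntz.
Qed.

End AlphaRepresentation.

Section Existence.
Variables (gT : finGroupType) (a : gT -> gT -> algC).
Hypothesis aC : is_cocycle [set: gT] a.

Let a_neq0 x y : a x y != 0.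
Proof. by have [a0 _ _] := aC; rewrite a0 ?in_setT. Qed.

Lemma is_alpha_rep_mul n (rho : gT -> 'M[algC]_n) :
  rho 1%g = 1%:M -> (forall g h, rho g *m rho h = a g h *: rho (g * h)%g) ->
  is_alpha_rep [set: gT] a rho.
Proof.
move=> rho1 rhoM; split=> // g _.
suff : rho g *m ((a g g^-1%g)^-1 *: rho g^-1%g) = 1%:M by case/mulmx1_unit.
by rewrite -scalemxAr rhoM mulgV rho1 scalerA mulVf // scale1r.
Qed.

Lemma sub_alpha_rep m (rho : gT -> 'M[algC]_m) (U : 'M[algC]_m) :
  is_alpha_rep [set: gT] a rho -> (forall g, g \in [set: gT] -> (U *m rho g <= U)%MS) ->
  exists sigma : gT -> 'M[algC]_(\rank U), is_alpha_rep [set: gT] a sigma.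
Proof.
move=> [rho1 _ rhoM] invU; pose B := row_base U.
have invB g : (B *m rho g <= B)%MS.
  by rewrite !eq_row_base; apply: submx_trans (invU g (in_setT g)); rewrite submxMr ?eq_row_base.
have BK : B *m pinvmx B = 1%:M.
  by apply: (row_free_inj (row_base_free U)); rewrite mul1mx mulmxKpV.
exists (fun g => B *m rho g *m pinvmx B); apply: is_alpha_rep_mul; first by rewrite rho1 mulmx1.
move=> g h; rewrite mulmxA (mulmxA _ B) (mulmxKpV (invB g)) -(mulmxA B) rhoM ?in_setT //.
by rewrite -scalemxAr -scalemxAl.
Qed.

(* The right regular alpha-representation, on the basis indexed by enum gT. *)
Definition alpha_regrep (g : gT) : 'M[algC]_#|gT| :=
  \matrix_(i, j) (if enum_val j == (enum_val i * g)%g then a (enum_val i) g else 0).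

Lemma alpha_regrep_rep : is_alpha_rep [set: gT] a alpha_regrep.
Proof.
have [_ a1 aA] := aC; apply: is_alpha_rep_mul.
  apply/matrixP => i j; rewrite !mxE mulg1 (proj2 (a1 _ (in_setT _))) (inj_eq enum_val_inj).
  by rewrite eq_sym; case: eqP.
move=> g h; apply/matrixP => i k; rewrite !mxE.
rewrite (bigD1 (enum_rank (enum_val i * g)%g)) //= big1 ?addr0; last first.
  move=> j nj; rewrite !mxE; case: eqP => [ej|]; last by rewrite mul0r.
  by rewrite -ej enum_valK eqxx in nj.
rewrite !mxE enum_rankK eqxx -mulgA; case: eqP => _; last by rewrite !mulr0.
exact: aA (in_setT _) (in_setT _) (in_setT _).
Qed.

(* An alpha-representation with no proper nonzero invariant subspace is
   irreducible; otherwise descend to one, of smaller degree. *)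
Lemma exists_alpha_irr : exists n (rho : gT -> 'M[algC]_n),
  is_alpha_rep [set: gT] a rho /\ alpha_irreducible [set: gT] rho.
Proof.
suff : forall m (rho : gT -> 'M[algC]_m), (0 < m)%N -> is_alpha_rep [set: gT] a rho ->
    exists n (rho : gT -> 'M[algC]_n),
      is_alpha_rep [set: gT] a rho /\ alpha_irreducible [set: gT] rho.
  by apply; [apply/card_gt0P; exists 1%g | apply: alpha_regrep_rep].
elim/ltn_ind => m IH rho m_gt0 rhoR.
have [[U [invU nzU ltU]] | noU] := classic (exists U : 'M[algC]_m,
  [/\ forall g, g \in [set: gT] -> (U *m rho g <= U)%MS, U != 0 & ~~ row_full U]).
  have [sigma sigmaR] := sub_alpha_rep rhoR invU.
  apply: (IH (\rank U)) sigmaR; last by rewrite lt0n mxrank_eq0.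
  by rewrite ltn_neqAle rank_leq_col andbT.
exists m, rho; split=> //; split=> // U invU.
have [-> | nzU] := eqVneq U 0; first by left.
by right; apply/negPn/negP => ltU; apply: noU; exists U.
Qed.

Lemma has_faithful_irrP : nilpotent [set: gT] ->
  has_faithful_irr [set: gT] a <-> regular_center_trivial a.
Proof.
move=> nilG; split=> [[n [rho [rhoR irr faith]]] | trivZ].
  by apply/(alpha_faithfulP rhoR (proj1 irr) nilG irr).
have [n [rho [rhoR irr]]] := exists_alpha_irr.
by exists n, rho; split=> //; apply/(alpha_faithfulP rhoR (proj1 irr) nilG irr).
Qed.

End Existence.

Section DirectProduct.
Variables (hT kT : finGroupType).

Lemma center_pair (x : hT) (y : kT) :
  ((x, y) \in 'Z([set: hT * kT]))%g = (x \in 'Z([set: hT]))%g && (y \in 'Z([set: kT]))%g.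
Proof.
apply/centerP/andP => [[_ cxy] | [/centerP[_ cx] /centerP[_ cy]]].
  split; apply/centerP; split=> [|g _]; rewrite ?in_setT //.
    by have [] := cxy (g, 1%g) (in_setT _).
  by have [] := cxy (1%g, g) (in_setT _).
split=> [|[h k] _]; rewrite ?in_setT // /commute /=.
rewrite [LHS]surjective_pairing [RHS]surjective_pairing /=.
by rewrite (cx h) ?in_setT // (cy k) ?in_setT.
Qed.

Lemma pgroup_pair p : (p.-group [set: hT] -> p.-group [set: kT] -> p.-group [set: hT * kT])%g.
Proof. by rewrite /pgroup !cardsT card_prod pnatM => -> ->. Qed.

Variable f : hT -> kT -> algC.
Hypothesis fB : is_bihom f.

Lemma bihomx1 h : f h 1%g = 1.
Proof. by have [f0 _ fM] := fB; apply: (mulfI (f0 h 1%g)); rewrite -fM mulg1 mulr1. Qed.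

Lemma bihom1x k : f 1%g k = 1.
Proof. by have [f0 fM _] := fB; apply: (mulfI (f0 1%g k)); rewrite -fM mulg1 mulr1. Qed.

Lemma bihom_derived1 z : z \in [~: [set: hT * kT], [set: hT * kT]]%g ->
  (forall h, f h z.2 = 1) /\ (forall k, f z.1 k = 1).
Proof.
have [f0 fMl fMr] := fB; move=> Dz; split=> [h | k].
  by apply: (mulhom_derived1 (phi := fun z : hT * kT => f h z.2)) => // x y; apply: fMr.
by apply: (mulhom_derived1 (phi := fun z : hT * kT => f z.1 k)) => // x y; apply: fMl.
Qed.

Variables (b : hT -> hT -> algC) (c : kT -> kT -> algC).
Hypotheses (bC : is_cocycle [set: hT] b) (cC : is_cocycle [set: kT] c).

Lemma prod_cocycle_cocycle : is_cocycle [set: hT * kT] (prod_cocycle b c f).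
Proof.
have [b0 b1 bA] := bC; have [c0 c1 cA] := cC; have [f0 fMl fMr] := fB.
rewrite /prod_cocycle; split=> [x y _ _ | x _ | x y z _ _ _] /=.
- by rewrite !mulf_neq0 ?b0 ?c0 ?in_setT.
- have [-> ->] := b1 x.1 (in_setT _); have [-> ->] := c1 x.2 (in_setT _).
  by rewrite bihomx1 bihom1x !mulr1.
- have bxyz := bA x.1 y.1 z.1 (in_setT _) (in_setT _) (in_setT _).
  have cxyz := cA x.2 y.2 z.2 (in_setT _) (in_setT _) (in_setT _).
  rewrite fMl fMr.
  transitivity ((b x.1 y.1 * b (x.1 * y.1)%g z.1) * (c x.2 y.2 * c (x.2 * y.2)%g z.2) *
    (f x.1 y.2 * f x.1 z.2 * f y.1 z.2)); first by ring.
  by rewrite bxyz cxyz; ring.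
Qed.

Lemma prod_cocycle_regular (x : hT) (y : kT) :
  (x \in 'Z([set: hT]))%g -> (y \in 'Z([set: kT]))%g ->
  (forall k, f x k = 1) -> (forall h, f h y = 1) ->
  alpha_regular [set: hT * kT] (prod_cocycle b c f) (x, y) <->
  alpha_regular [set: hT] b x /\ alpha_regular [set: kT] c y.
Proof.
move=> Zx Zy fx1 fy1; have [_ b1 _] := bC; have [_ c1 _] := cC.
have Zxy : ((x, y) \in 'Z([set: hT * kT]))%g by rewrite center_pair Zx.
rewrite !alpha_regular_center // /prod_cocycle /=.
split=> [reg | [bx cy] [h k]]; last by rewrite fx1 fy1 bx cy.
split=> [h | k].
  by have := reg (h, 1%g); rewrite /= fx1 fy1 (proj1 (c1 y (in_setT _))) (proj2 (c1 y (in_setT _))) !mulr1.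
by have := reg (1%g, k); rewrite /= fx1 fy1 (proj1 (b1 x (in_setT _))) (proj2 (b1 x (in_setT _))) !mulr1 !mul1r.
Qed.

Lemma prod_regular_center_trivial :
  ('Z([set: hT * kT]) \subset [~: [set: hT * kT], [set: hT * kT]])%g ->
  regular_center_trivial (prod_cocycle b c f) <->
  regular_center_trivial b /\ regular_center_trivial c.
Proof.
move=> sZD; have Z1 (gT : finGroupType) := group1 ('Z([set: gT]))%G.
have reg_pair x y : (x \in 'Z([set: hT]))%g -> (y \in 'Z([set: kT]))%g ->
    alpha_regular [set: hT * kT] (prod_cocycle b c f) (x, y) <->
    alpha_regular [set: hT] b x /\ alpha_regular [set: kT] c y.
  move=> Zx Zy; have Zxy : ((x, y) \in 'Z([set: hT * kT]))%g by rewrite center_pair Zx.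
  by have [fy1 fx1] := bihom_derived1 (subsetP sZD _ Zxy); apply: prod_cocycle_regular.
split=> [trivZ | [trivH trivK] [x y]]; last first.
  rewrite center_pair => /andP[Zx Zy] /reg_pair[] // bx cy.
  by rewrite (trivH x Zx bx) (trivK y Zy cy).
split=> [x Zx bx | y Zy cy].
  apply: (congr1 fst (trivZ (x, 1%g) _ _)); first by rewrite center_pair Zx Z1.
  by apply/reg_pair; rewrite ?Z1 //; split=> //; apply: alpha_regular1.
apply: (congr1 snd (trivZ (1%g, y) _ _)); first by rewrite center_pair Zy Z1.
by apply/reg_pair; rewrite ?Z1 //; split=> //; apply: alpha_regular1.
Qed.

End DirectProduct.

Local Open Scope group_scope.

Theorem theorem3p7 (p : nat) (hT kT : finGroupType) :
  prime p ->
  p.-group [set: hT] -> ~~ abelian [set: hT] ->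
  p.-group [set: kT] -> ~~ abelian [set: kT] ->
  (* (1) *)
  (forall f : hT -> kT -> algC, is_bihom f ->
     forall n (rho : hT * kT -> 'M[algC]_n),
       is_alpha_rep [set: hT * kT]
         (prod_cocycle (@trivial_cocycle hT) (@trivial_cocycle kT) f) rho ->
       alpha_irreducible [set: hT * kT] rho ->
       ~ alpha_faithful [set: hT * kT] rho)
  /\
  (* (2) *)
  ('Z([set: hT * kT]) \subset [~: [set: hT * kT], [set: hT * kT]] ->
   forall (b : hT -> hT -> algC) (c : kT -> kT -> algC) (f : hT -> kT -> algC),
     is_cocycle [set: hT] b -> is_cocycle [set: kT] c -> is_bihom f ->
     (forall n (rho : hT * kT -> 'M[algC]_n),
        is_alpha_rep [set: hT * kT] (prod_cocycle b c f) rho ->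
        alpha_irreducible [set: hT * kT] rho ->
        (alpha_faithful [set: hT * kT] rho <->
         (forall x, x \in 'Z([set: hT]) -> alpha_regular [set: hT] b x -> x = 1) /\
         (forall y, y \in 'Z([set: kT]) -> alpha_regular [set: kT] c y -> y = 1)))
     /\
     (has_faithful_irr [set: hT * kT] (prod_cocycle b c f) <->
      has_faithful_irr [set: hT] b /\ has_faithful_irr [set: kT] c)).
Proof.
move=> _ pH nabH pK _; have nilG := pgroup_nil (pgroup_pair pH pK).
split=> [f fB n rho rhoR irr faith | sZD b c f bC cC fB].
  have ntD : [~: [set: hT], [set: hT]] != 1 by apply: contra nabH => /eqP/commG1P.
  have /trivgPn[x /setIP[Dx Zx] ntx] := meet_center_nil (pgroup_nil pH) (der_normal 1 _) ntD.
  have fx1 k : f x k = 1%R.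
    by have [f0 fM _] := fB; apply: (mulhom_derived1 (phi := f^~ k)).
  have Zx1 : (x, 1) \in 'Z([set: hT * kT]) by rewrite center_pair Zx group1.
  have x1 : x = 1.
    apply: (congr1 fst ((alpha_faithfulP rhoR (proj1 irr) nilG irr).1 faith _ Zx1 _)).
    apply/(prod_cocycle_regular (trivial_cocycle_cocycle hT) (trivial_cocycle_cocycle kT)
             Zx (group1 _) fx1 (bihomx1 fB)).
    by split.
  by rewrite x1 eqxx in ntx.
have regZ := prod_regular_center_trivial fB bC cC sZD.
split=> [n rho rhoR irr | ].
  exact: iff_trans (alpha_faithfulP rhoR (proj1 irr) nilG irr) regZ.
have cocG := prod_cocycle_cocycle fB bC cC.
by rewrite !has_faithful_irrP ?(pgroup_nil pH) ?(pgroup_nil pK).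
Qed.
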